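(* Let $\mathcal X$ be a finite set and $(F_x)_{x\in\mathcal X}$ mutually independent real random variables. Let $\epsilon>0$ and let $f_0\le f_1\le\dots\le f_l$ in $\mathbb R\cup\{\pm\infty\}$ with $f_0=-\infty$, $f_l=+\infty$, such that $\max_{x}\mathbb P[F_x\le f_1]\le2\epsilon$, $\max_x\mathbb P[F_x>f_{l-1}]\le2\epsilon$, and $\max_x\mathbb P[F_x\in(f_i,f_{i+1}]]\le2\epsilon$ for all $i=1,\dots,l-2$. Then for every $x\in\mathcal X$, $$\Big|\mathbb P[x\in X^*]-\sum_{i=0}^{l-1}\frac{g_x(f_{i+1})+g_x(f_i)}{2}\,\mathbb P[F_x\in(f_i,f_{i+1}]]\Big|\le\epsilon .$$
   Context: $X^*:=\arg\max_{z\in\mathcal X}F_z$ (a random subset), so $x\in X^*$ iff $F_x\ge F_z$ for all $z\neq x$. For $f\in\mathbb R\cup\{\pm\infty\}$, $g_x(f):=\prod_{z\in\mathcal X\setminus\{x\}}\mathbb P[F_z\le f]$ (so $g_x(-\infty)=0$, $g_x(+\infty)=1$). *)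

From HB Require Import structures.
From mathcomp Require Import all_boot all_order all_algebra.
From mathcomp Require Import all_classical all_reals all_analysis.
Set Implicit Arguments. Unset Strict Implicit. Unset Printing Implicit Defensive.
Import Order.TTheory GRing.Theory Num.Theory.
Local Open Scope classical_set_scope.
Local Open Scope ring_scope.

Definition mutually_independent d (T : measurableType d) (R : realType)
  (P : probability T R) (I : finType) (F : I -> {RV P >-> R}) : Prop :=
  forall (S : {set I}) (B : I -> set R), (forall i, measurable (B i)) ->
    P (\big[setI/setT]_(i in S) (F i @^-1` B i)) =
    (\prod_(i in S) P (F i @^-1` B i))%E.

Definition prb d (T : measurableType d) (R : realType)
  (P : probability T R) (A : set T) : R := fine (P A).

Definition in_argmax d (T : measurableType d) (R : realType)
  (P : probability T R) (I : finType) (F : I -> {RV P >-> R}) (x : I) : set T :=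
  [set w | forall z, F z w <= F x w].

Definition gx d (T : measurableType d) (R : realType)
  (P : probability T R) (I : finType) (F : I -> {RV P >-> R}) (x : I)
  (f : \bar R) : R :=
  \prod_(z in I | z != x) prb P [set w | ((F z w)%:E <= f)%E].

Definition in_ioc d (T : measurableType d) (R : realType)
  (P : probability T R) (I : finType) (F : I -> {RV P >-> R}) (x : I)
  (a b : \bar R) : set T :=
  [set w | (a < (F x w)%:E)%E /\ ((F x w)%:E <= b)%E].

From HB Require Import structures.
From mathcomp Require Import all_boot all_order all_algebra.
From mathcomp Require Import all_classical all_reals all_analysis.
From mathcomp Require Import lra zify measurable_realfun.
Import Order.TTheory GRing.Theory Num.Theory.
Local Open Scope classical_set_scope.
Local Open Scope ring_scope.

(* Cut the real line into the buckets (f i, f i.+1] and split the event x \in X^*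
   according to the bucket containing F x.  On the bucket (a, b], F x beats
   every other F z as soon as all of them are <= a and only if all of them
   are <= b, so by independence the probability of that piece lies between
   g_x(a) P[F x \in (a, b]] and g_x(b) P[F x \in (a, b]].  The midpoint of
   this interval errs by at most (g_x(b) - g_x(a)) eps, and these errors
   telescope to at most (g_x(+oo) - g_x(-oo)) eps <= eps. *)

Section extended_real_sets.
Context {R : realType}.

Lemma measurable_EFin_le (c : \bar R) : measurable [set r : R | (r%:E <= c)%E].
Proof.
case: c => [c||].
- have -> : [set r : R | (r%:E <= c%:E)%E] = [set` `]-oo, c]].
    by apply/seteqP; split => r /=; rewrite lee_fin in_itv.
  exact: measurable_itv.
- by rewrite (_ : [set _ | _] = setT) //; apply/seteqP; split => r // _; exact: leey.
- by rewrite (_ : [set _ | _] = set0) //; apply/seteqP; split => r //=; rewrite leeNy_eq.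
Qed.

Lemma measurable_EFin_ioc (a b : \bar R) :
  measurable [set r : R | (a < r%:E)%E /\ (r%:E <= b)%E].
Proof.
rewrite (_ : [set _ | _] = ~` [set r | (r%:E <= a)%E] `&` [set r | (r%:E <= b)%E]).
  by apply: measurableI; [apply: measurableC|]; exact: measurable_EFin_le.
apply/seteqP; split => r /= [ar rb]; split => //.
- by rewrite leNgt ar.
- by rewrite ltNge; exact/negP.
Qed.

End extended_real_sets.

Section real_probability.
Context {d : measure_display} {T : measurableType d} {R : realType}.
Variable P : probability T R.

Lemma prbE A : measurable A -> P A = (prb P A)%:E.
Proof. by move=> mA; rewrite /prb fineK // fin_num_measure. Qed.

Lemma prb_ge0 A : 0 <= prb P A.
Proof. exact/fine_ge0/measure_ge0. Qed.

Lemma prb_le1 A : measurable A -> prb P A <= 1.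
Proof. by move=> mA; rewrite -lee_fin -prbE // probability_le1. Qed.

Lemma le_prb A B : measurable A -> measurable B -> A `<=` B -> prb P A <= prb P B.
Proof. by move=> mA mB AB; rewrite -lee_fin -!prbE // le_measure // inE. Qed.

Lemma prb_partition {n} (A : set T) (J : 'I_n -> set T) :
  measurable A -> (forall i, measurable (J i)) -> trivIset setT J ->
  A `<=` \bigcup_i J i -> prb P A = \sum_(i < n) prb P (A `&` J i).
Proof.
move=> mA mJ tJ AJ; have mAJ i : measurable (A `&` J i) by exact: measurableI.
have UAJ : A = \big[setU/set0]_(i < n) (A `&` J i).
  rewrite -bigcup_pred -setI_bigcupr; apply/esym/setIidPl.
  by move=> w /AJ [i _ Jiw]; exists i.
apply: EFin_inj; rewrite -prbE // -sumEFin {1}UAJ measure_semi_additive_ord //.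
- by apply: eq_bigr => i _; rewrite -prbE.
- exact: trivIset_setIl.
- by rewrite -UAJ.
Qed.

End real_probability.

Lemma midpoint_sum_error {R : realFieldType} (l : nat) (g p q : nat -> R) (eps : R) :
  0 <= eps -> 0 <= g 0%N -> g l <= 1 ->
  (forall i, (i < l)%N -> g i <= g i.+1) ->
  (forall i, (i < l)%N -> 0 <= p i <= 2 * eps) ->
  (forall i, (i < l)%N -> g i * p i <= q i <= g i.+1 * p i) ->
  `| \sum_(i < l) q i - \sum_(i < l) ((g i.+1 + g i) / 2) * p i | <= eps.
Proof.
move=> eps_ge0 g0 gl g_mono p_bnd q_bnd.
rewrite -sumrB; apply: le_trans (ler_norm_sum _ _ _) _.
apply: (@le_trans _ _ (\sum_(i < l) (g i.+1 - g i) * eps)).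
  apply: ler_sum => -[i /= il] _.
  have /andP[p0 pe] := p_bnd i il; have /andP[lo hi] := q_bnd i il.
  have gg := g_mono i il.
  (* the midpoint is at distance at most (g i.+1 - g i) p i / 2 from [q i] *)
  rewrite ler_norml; apply/andP; split; nra.
rewrite -mulr_suml -(big_mkord xpredT (fun i => g i.+1 - g i)) telescope_sumr //.
nra.
Qed.

Section ereal_grid.
Context {R : realType} {l : nat} {f : nat -> \bar R}.
Hypothesis f_mono : forall i, (i < l)%N -> (f i <= f i.+1)%E.
Hypotheses (f0 : f 0%N = -oo%E) (fl : f l = +oo%E).

Lemma grid_le i j : (i <= j <= l)%N -> (f i <= f j)%E.
Proof.
move=> /andP[+ jl]; elim: j jl => [|j IH] jl; first by rewrite leqn0 => /eqP ->.
rewrite leq_eqVlt => /orP[/eqP -> //|ij].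
exact: le_trans (IH (ltnW jl) ij) (f_mono j jl).
Qed.

Lemma grid_cover (r : R) : exists2 i, (i < l)%N & (f i < r%:E <= f i.+1)%E.
Proof.
suff cover n : (n <= l)%N -> (r%:E <= f n)%E ->
    exists2 i, (i < n)%N & (f i < r%:E <= f i.+1)%E.
  by apply: cover => //; rewrite fl leey.
elim: n => [|n IH] nl rn; first by move: rn; rewrite f0 leeNy_eq.
have [rn'|nr] := leP r%:E (f n).
- by have [i ? ?] := IH (ltnW nl) rn'; exists i => //; exact: ltnW.
- by exists n => //; rewrite nr.
Qed.

Lemma grid_unique i j (r : R) : (i < l)%N -> (j < l)%N ->
  (f i < r%:E <= f i.+1)%E -> (f j < r%:E <= f j.+1)%E -> i = j.
Proof.
suff lt_contra a b : (a < b)%N -> (b < l)%N ->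
    ~ [/\ (r%:E <= f a.+1)%E & (f b < r%:E)%E].
  move=> il jl /andP[ir ri] /andP[jr rj].
  case: (ltngtP i j) => // [ij|ji]; exfalso.
  - exact: (lt_contra i j).
  - exact: (lt_contra j i).
move=> ab bl [ra br]; have := grid_le a.+1 b.
by rewrite ab ltnW //= => /(_ isT) /(le_trans ra) /(lt_le_trans br); rewrite ltxx.
Qed.

End ereal_grid.

Section argmax_in_bucket.
Context {d : measure_display} {T : measurableType d} {R : realType}.
Context {P : probability T R} {I : finType} (F : I -> {RV P >-> R}) (x : I).

Definition others_le (c : \bar R) : set T :=
  [set w | forall z, z != x -> ((F z w)%:E <= c)%E].

Lemma measurable_in_argmax : measurable (in_argmax F x).
Proof.
rewrite (_ : in_argmax F x =
    \big[setI/setT]_(z <- index_enum I) [set w | ((F z w)%:E <= (F x w)%:E)%E]).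
  apply: bigsetI_measurable => z _; rewrite -[X in measurable X]setTI.
  by apply: measurable_lee => //; apply/measurable_EFinP; exact: measurable_funP.
rewrite -bigcap_seq; apply/seteqP; split => w /= Aw z.
- by move=> _ /=; rewrite lee_fin; exact: Aw.
- by rewrite -lee_fin; apply: Aw; exact: mem_index_enum.
Qed.

Lemma measurable_in_ioc a b : measurable (in_ioc F x a b).
Proof. exact: (measurable_funPTI (F x) (measurable_EFin_ioc a b)). Qed.

Lemma measurable_others_le c : measurable (others_le c).
Proof.
rewrite (_ : others_le c =
    \big[setI/setT]_(z <- index_enum I | z != x) F z @^-1` [set r | (r%:E <= c)%E]).
  by apply: bigsetI_measurable => z _; exact: measurable_funPTI (measurable_EFin_le c).
rewrite -bigcap_seq_cond; apply/seteqP; split => w /= Ow z.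
- by move=> /andP[_]; exact: Ow.
- by move=> zx; apply: Ow => /=; rewrite mem_index_enum.
Qed.

Lemma in_ioc_Ny b : in_ioc F x -oo%E b = [set w | ((F x w)%:E <= b)%E].
Proof. by apply/seteqP; split => w /= => [[]|] // wb; split; first exact: ltNyr. Qed.

Lemma in_ioc_y a : in_ioc F x a +oo%E = [set w | (a < (F x w)%:E)%E].
Proof. by apply/seteqP; split => w /= => [[]|] // aw; split; last exact: leey. Qed.

Lemma prb_split_grid {l} {f : nat -> \bar R} (A : set T) :
  (forall i, (i < l)%N -> (f i <= f i.+1)%E) -> f 0%N = -oo%E -> f l = +oo%E ->
  measurable A -> prb P A = \sum_(i < l) prb P (A `&` in_ioc F x (f i) (f i.+1)).
Proof.
move=> f_mono f0 fl mA.
apply: (prb_partition P A (fun i : 'I_l => in_ioc F x (f i) (f i.+1))) => //.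
- by move=> i; exact: measurable_in_ioc.
- move=> i j _ _ [w [[iw wi] [jw wj]]]; apply/val_inj.
  by apply: (grid_unique f_mono _ _ (F x w)); rewrite ?ltn_ord //; apply/andP.
- move=> w _; have [i il /andP[iw wi]] := grid_cover f0 fl (F x w).
  by exists (Ordinal il).
Qed.

Lemma gx_ge0 c : 0 <= gx F x c.
Proof. by apply: prodr_ge0 => z _; exact: prb_ge0. Qed.

Lemma gx_le1 c : gx F x c <= 1.
Proof.
apply: prodr_ile1 => z _; rewrite prb_ge0 prb_le1 //.
exact: measurable_funPTI (measurable_EFin_le c).
Qed.

Lemma le_gx c c' : (c <= c')%E -> gx F x c <= gx F x c'.
Proof.
move=> cc'; apply: ler_prod => z _; rewrite prb_ge0 le_prb //=.
- exact: measurable_funPTI (measurable_EFin_le c).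
- exact: measurable_funPTI (measurable_EFin_le c').
- by move=> w /= /le_trans; apply.
Qed.

Hypothesis F_indep : mutually_independent F.

Lemma prb_others_le_in_ioc a b c :
  prb P (others_le c `&` in_ioc F x a b) = gx F x c * prb P (in_ioc F x a b).
Proof.
pose B z := if z == x then [set r : R | (a < r%:E)%E /\ (r%:E <= b)%E]
            else [set r : R | (r%:E <= c)%E].
have mB z : measurable (B z).
  by rewrite /B; case: ifP => _; [exact: measurable_EFin_ioc|exact: measurable_EFin_le].
have mFB z : measurable (F z @^-1` B z) by exact: measurable_funPTI.
have -> : others_le c `&` in_ioc F x a b = \big[setI/setT]_(z in [set: I]%SET) F z @^-1` B z.
  rewrite -bigcap_seq_cond; apply/seteqP; split => w /=.
  - by move=> [Ow Jw] z _; rewrite /B; case: eqP => [->|/eqP/Ow].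
  - move=> Bw; have {}Bw z : B z (F z w).
      by apply: Bw; rewrite /= mem_index_enum finset.in_setT.
    split; last by have := Bw x; rewrite /B eqxx.
    by move=> z zx; have := Bw z; rewrite /B (negbTE zx).
apply: EFin_inj; rewrite -prbE; last exact: bigsetI_measurable.
rewrite F_indep // (bigD1 x) ?finset.in_setT // EFinM muleC; congr (_ * _)%E.
- by rewrite -prbE; [rewrite /B eqxx|exact: measurable_in_ioc].
- rewrite /gx -prodEFin; apply: eq_big => [z|z /andP[_ zx]]; first by rewrite !inE.
  by rewrite /B (negbTE zx) prbE //; exact: measurable_funPTI (measurable_EFin_le c).
Qed.

Lemma prb_in_argmax_in_ioc_bounds a b :
  gx F x a * prb P (in_ioc F x a b)
  <= prb P (in_argmax F x `&` in_ioc F x a b)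
  <= gx F x b * prb P (in_ioc F x a b).
Proof.
have mAJ := measurableI _ _ measurable_in_argmax (measurable_in_ioc a b).
have mOJ c := measurableI _ _ (measurable_others_le c) (measurable_in_ioc a b).
rewrite -!prb_others_le_in_ioc; apply/andP; split; apply: le_prb => // w.
- move=> [Ow [aw wb]]; split=> [z|]; last by [].
  have [-> //|zx] := eqVneq z x.
  by rewrite -lee_fin; apply/ltW/(le_lt_trans (Ow z zx) aw).
- by move=> [Aw [aw wb]]; split=> [z zx|//]; apply: le_trans wb; rewrite lee_fin.
Qed.

End argmax_in_bucket.

Theorem proposition8 (d : measure_display) (T : measurableType d) (R : realType)
  (P : probability T R) (I : finType) (F : I -> {RV P >-> R})
  (eps : R) (l : nat) (f : nat -> \bar R) :
  mutually_independent F ->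
  0 < eps ->
  (forall i, (i < l)%N -> (f i <= f i.+1)%E) ->
  f 0%N = -oo%E -> f l = +oo%E ->
  (forall x, prb P [set w | ((F x w)%:E <= f 1%N)%E] <= 2 * eps) ->
  (forall x, prb P [set w | (f l.-1 < (F x w)%:E)%E] <= 2 * eps) ->
  (forall x i, (1 <= i)%N -> (i <= l - 2)%N ->
     prb P (in_ioc F x (f i) (f i.+1)) <= 2 * eps) ->
  forall x : I,
    `| prb P (in_argmax F x)
       - \sum_(i < l) ((gx F x (f i.+1) + gx F x (f i)) / 2)
                        * prb P (in_ioc F x (f i) (f i.+1)) | <= eps.
Proof.
move=> F_indep eps_gt0 f_mono f0 fl low_tail up_tail mid_buckets x.
have bucket_le i : (i < l)%N -> prb P (in_ioc F x (f i) (f i.+1)) <= 2 * eps.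
  case: i => [|i] il; first by rewrite f0 in_ioc_Ny; exact: low_tail.
  have [last_bucket|not_last] := eqVneq i.+2 l.
  - by subst l; rewrite fl in_ioc_y; exact: up_tail.
  - by apply: mid_buckets => //; move: il not_last; lia.
rewrite (prb_split_grid F x _ f_mono f0 fl (measurable_in_argmax F x)).
apply: (midpoint_sum_error l (fun i => gx F x (f i))
  (fun i => prb P (in_ioc F x (f i) (f i.+1)))
  (fun i => prb P (in_argmax F x `&` in_ioc F x (f i) (f i.+1)))).
- exact: ltW.
- exact: gx_ge0.
- exact: gx_le1.
- by move=> i il; exact/le_gx/f_mono.
- by move=> i il; rewrite prb_ge0 bucket_le.
- by move=> i _; exact: prb_in_argmax_in_ioc_bounds.
Qed.
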